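(* Let $\mathcal{D}$ be any basic action theory whose initial theory $\mathcal{D}_0$ includes the axiom $$(\star)\quad [\forall \vec x\, \exists \iota \textstyle\bigwedge_i f_i(\iota) = x_i] \land [\forall \iota,\iota'.\ \textstyle\bigwedge_i f_i(\iota) = f_i(\iota') \supset \iota = \iota'],$$ and let $\phi$ be any situation-suppressed $\mathcal{L}$-formula. Then $$\frac{1}{\gamma}\sum_{\{s':\phi[s']\}} p(s',S_0) \quad\text{and}\quad \frac{1}{\gamma'}\sum_{\vec x} \langle \iota.\ \textstyle\bigwedge_i f_i(\iota) = x_i \land \phi[\iota] \to p(\iota,S_0)\rangle$$ define the same number (in every $\mathbb{R}$-interpretation satisfying $\mathcal{D}$), where $\gamma,\gamma'$ are the respective numerators with $\phi$ replaced by $\mathit{true}$.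
   Context: Situation calculus: a many-sorted language $\mathcal{L}$ with sorts action, situation, object; $do(a,s)$ is the successor of $s$ under action $a$; $S_0$ is the actual initial situation; $\mathit{Init}(s) \doteq \neg\exists a,s'.\, s = do(a,s')$, and $\iota,\iota'$ range over initial situations. $f_1,\ldots,f_n$ are all the fluents, each taking only a situation argument and taking values in a finite set; $\vec x$ ranges over value vectors, $i$ over $1..n$. $\phi[s]$ restores situation argument $s$ in $\phi$. For a variable $z$, formula $\psi$ and term $t$, $\langle z.\ \psi \to t\rangle = u$ abbreviates $[(\exists z\psi)\supset \forall z(\psi \supset u = t)] \land [(\neg\exists z\psi) \supset u = 0]$. Distinguished symbols: $\mathit{Poss}(a,s)$, $p(s',s)$ (weight of $s'$ when in $s$), $l(a,s)$ (likelihood). A basic action theory consists of $\mathcal{D}_0$ containing (P1) $\forall \iota,s.\ p(s,\iota) \ge 0 \land (p(s,\iota) > 0 \supset \mathit{Init}(s))$; precondition axioms; successor state axioms including (P2) $p(s',do(a,s)) = u \equiv \exists s''[s' = do(a,s'') \land \mathit{Poss}(a,s'') \land u = p(s'',s)\times l(a,s'')] \lor \neg\exists s''[s'=do(a,s'')\land \mathit{Poss}(a,s'')] \land u = 0$; likelihood axioms $l(A(\vec x),s)=u\equiv\psi_A(\vec x,u,s)$; foundational axioms. Entailment is over $\mathbb{R}$-interpretations (arithmetic, $e,\pi$, exp, log with usual meaning over the reals). Finite sums are abbreviations for second-order formulas. *)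

From HB Require Import structures.
From mathcomp Require Import all_boot all_order all_algebra.
From mathcomp Require Import reals.
From Stdlib Require List.
Set Implicit Arguments. Unset Strict Implicit. Unset Printing Implicit Defensive.
Import Order.TTheory GRing.Theory Num.Theory.
Local Open Scope ring_scope.

(* Semantic rendering of an R-interpretation of the situation calculus:
   Act = domain of sort action, Sit = domain of sort situation,
   do_ = interpretation of do, S0 = interpretation of S_0. *)

Definition Init (Act Sit : Type) (do_ : Act -> Sit -> Sit) (s : Sit) : Prop :=
  ~ exists a s', s = do_ a s'.

Definition foundational (Act Sit : Type) (do_ : Act -> Sit -> Sit) (S0 : Sit)
  : Prop :=
  (forall a1 a2 s1 s2, do_ a1 s1 = do_ a2 s2 -> a1 = a2 /\ s1 = s2) /\
  (forall P : Sit -> Prop,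
      (forall s, Init do_ s -> P s) ->
      (forall a s, P s -> P (do_ a s)) -> forall s, P s) /\
  Init do_ S0.

Definition axP1 (R : realType) (Act Sit : Type) (do_ : Act -> Sit -> Sit)
  (p : Sit -> Sit -> R) : Prop :=
  forall iota s, Init do_ iota -> 0 <= p s iota /\ (0 < p s iota -> Init do_ s).

Definition axP2 (R : realType) (Act Sit : Type) (do_ : Act -> Sit -> Sit)
  (Poss : Act -> Sit -> Prop) (l : Act -> Sit -> R) (p : Sit -> Sit -> R)
  : Prop :=
  forall s' a s u,
    p s' (do_ a s) = u <->
    ((exists s'', s' = do_ a s'' /\ Poss a s'' /\ u = p s'' s * l a s'') \/
     ((~ exists s'', s' = do_ a s'' /\ Poss a s'') /\ u = 0)).

Definition axStar (n : nat) (V : 'I_n -> finType) (Act Sit : Type)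
  (do_ : Act -> Sit -> Sit) (f : forall i : 'I_n, Sit -> V i) : Prop :=
  (forall x : {dffun forall i : 'I_n, V i},
      exists iota, Init do_ iota /\ forall i, f i iota = x i) /\
  (forall iota iota', Init do_ iota -> Init do_ iota' ->
      (forall i, f i iota = f i iota') -> iota = iota').

(* Finite sum  Sum_{s : Q s} w(s) = v : the sum of w over the (finitely many)
   s satisfying Q with nonzero weight. *)
Definition sum_over (R : realType) (Sit : Type) (Q : Sit -> Prop)
  (w : Sit -> R) (v : R) : Prop :=
  exists ls : seq Sit, List.NoDup ls /\
    (forall s, List.In s ls <-> Q s /\ w s <> 0) /\
    v = \sum_(s <- ls) w s.

Definition cond_term (R : realType) (Sit : Type) (psi : Sit -> Prop)
  (t : Sit -> R) (u : R) : Prop :=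
  ((exists z, psi z) -> forall z, psi z -> u = t z) /\
  ((~ exists z, psi z) -> u = 0).

From HB Require Import structures.
From mathcomp Require Import all_boot all_order all_algebra.
From mathcomp Require Import boolp reals.
From Stdlib Require List FinFun.
From Stdlib Require Import Permutation.
Set Implicit Arguments. Unset Strict Implicit. Unset Printing Implicit Defensive.
Import Order.TTheory GRing.Theory Num.Theory.
Local Open Scope ring_scope.

(* By (P1) the weight p(., S_0) vanishes outside the initial situations, and by
   (star) the fluent vector is a bijection between initial situations and value
   vectors.  Both finite sums over situations therefore reindex as sums over
   value vectors, whose x-th summand is exactly the conditional term for the
   unique initial situation with fluent values x. *)

Lemma In_mem (T : eqType) (x : T) (s : seq T) : List.In x s <-> x \in s.
Proof.
elim: s => [|a s IH] //=; rewrite in_cons; split.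
- by case=> [->|/IH ->]; rewrite ?eqxx ?orbT.
- by case/orP=> [/eqP ->|/IH]; [left|right].
Qed.

Lemma uniq_NoDup (T : eqType) (s : seq T) : uniq s -> List.NoDup s.
Proof.
elim: s => [|a s IH] /=; first by constructor.
by case/andP=> /negP a_s /IH nd; constructor=> // /In_mem.
Qed.

Lemma Permutation_big (R : nmodType) (S : Type) (F : S -> R) (s1 s2 : seq S) :
  Permutation s1 s2 -> \sum_(x <- s1) F x = \sum_(x <- s2) F x.
Proof.
elim=> [//|x l l' _ IH|x y l|l l' l'' _ -> _ -> //].
- by rewrite !big_cons IH.
- by rewrite !big_cons addrCA.
Qed.

Lemma sum_over_unique (R : realType) (S : Type) (Q : S -> Prop) (w : S -> R)
  (v1 v2 : R) : sum_over Q w v1 -> sum_over Q w v2 -> v1 = v2.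
Proof.
move=> [l1 [nd1 [mem1 ->]]] [l2 [nd2 [mem2 ->]]].
apply: Permutation_big; apply: NoDup_Permutation => // s.
by rewrite mem1 mem2.
Qed.

Lemma cond_term_unique (R : realType) (S : Type) (psi : S -> Prop) (t : S -> R)
  (u1 u2 : R) : cond_term psi t u1 -> cond_term psi t u2 -> u1 = u2.
Proof.
move=> [ex1 nex1] [ex2 nex2]; case: (pselect (exists z, psi z)) => [ex|nex].
- by case: (ex) => z psiz; rewrite (ex1 ex z) ?(ex2 ex z).
- by rewrite nex1 ?nex2.
Qed.

Lemma cond_term_singleton (R : realType) (S : Type) (psi : S -> Prop) (t : S -> R)
  (z0 : S) (P : Prop) :
  (forall z, psi z <-> z = z0 /\ P) ->
  cond_term psi t (if `[< P >] then t z0 else 0).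
Proof.
move=> psiE; split.
- by move=> _ z /psiE [-> /asboolT ->].
- by move=> nex; case: asboolP => // HP; case: nex; exists z0; apply/psiE.
Qed.

Section Reindexing.
Variables (R : realType) (T : finType) (S : Type) (I : S -> Prop).
Variables (enc : S -> T) (dec : T -> S).
Hypotheses (decK : cancel dec enc) (encK : forall s, I s -> dec (enc s) = s).

Lemma sum_over_reindex (Q : S -> Prop) (w : S -> R) :
  (forall s, w s <> 0 -> I s) ->
  sum_over Q w (\sum_x if `[< Q (dec x) >] then w (dec x) else 0).
Proof.
move=> wI; pose P x := `[< Q (dec x) /\ w (dec x) <> 0 >].
exists (map dec [seq x <- enum T | P x]); split; [|split].
- apply: FinFun.Injective_map_NoDup; first exact: can_inj decK.
  by apply: uniq_NoDup; rewrite filter_uniq ?enum_uniq.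
- move=> s; rewrite List.in_map_iff; split.
  + by case=> x [<- /In_mem]; rewrite mem_filter => /andP [/asboolP].
  + case=> Qs ws; have Is := wI _ ws.
    exists (enc s); rewrite encK //; split=> //.
    by apply/In_mem; rewrite mem_filter mem_enum andbT /P encK //; apply/asboolP.
- rewrite big_map big_filter big_enum_cond /= [RHS]big_mkcond.
  apply: eq_bigr => x _.
  rewrite /P; case: (pselect (Q (dec x))) => [Qx|nQx]; last first.
    by rewrite !asboolF // => -[].
  rewrite asboolT //; case: asboolP => // nQw.
  by case: (eqVneq (w (dec x)) 0) => // /eqP wx; case: nQw.
Qed.

End Reindexing.

Section InitialSituations.
Variables (n : nat) (V : 'I_n -> finType) (Act Sit : Type).
Variables (do_ : Act -> Sit -> Sit) (f : forall i : 'I_n, Sit -> V i).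
Hypothesis star : axStar do_ f.
Local Notation vec := {dffun forall i : 'I_n, V i}.

Definition fluent_vector (s : Sit) : vec := [ffun i => f i s].

Definition initial_of (x : vec) : Sit := proj1_sig (cid (proj1 star x)).

Lemma initial_ofP (x : vec) :
  Init do_ (initial_of x) /\ forall i, f i (initial_of x) = x i.
Proof. exact: proj2_sig (cid (proj1 star x)). Qed.

Lemma initial_ofE (x : vec) (z : Sit) :
  Init do_ z /\ (forall i, f i z = x i) <-> z = initial_of x.
Proof.
have [Ix fx] := initial_ofP x; split=> [[Iz fz]|->] //.
by apply: (proj2 star) => // i; rewrite fz fx.
Qed.

Lemma initial_ofK : cancel initial_of fluent_vector.
Proof. by move=> x; apply/ffunP => i; rewrite ffunE (proj2 (initial_ofP x)). Qed.

Lemma fluent_vectorK s : Init do_ s -> initial_of (fluent_vector s) = s.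
Proof. by move=> Is; apply/esym/initial_ofE; split=> // i; rewrite ffunE. Qed.

End InitialSituations.

Lemma axP1_support (R : realType) (Act Sit : Type) (do_ : Act -> Sit -> Sit)
  (p : Sit -> Sit -> R) (iota s : Sit) :
  axP1 do_ p -> Init do_ iota -> p s iota <> 0 -> Init do_ s.
Proof.
move=> P1 Iiota ps; have [p_ge0 p_gt0] := P1 iota s Iiota.
by apply: p_gt0; rewrite lt_neqAle p_ge0 andbT eq_sym; apply/eqP.
Qed.

Theorem mainTheorem10 (R : realType) (n : nat) (V : 'I_n -> finType)
  (Act Sit : Type) (do_ : Act -> Sit -> Sit) (S0 : Sit)
  (f : forall i : 'I_n, Sit -> V i)
  (Poss : Act -> Sit -> Prop) (l : Act -> Sit -> R) (p : Sit -> Sit -> R)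
  (phi : Sit -> Prop) :
  foundational do_ S0 -> axP1 do_ p -> axP2 do_ Poss l p -> axStar do_ f ->
  let psi (x : {dffun forall i : 'I_n, V i}) (Q : Sit -> Prop) (iota : Sit) :=
    Init do_ iota /\ (forall i, f i iota = x i) /\ Q iota in
  (exists (v g : R) (u u' : {dffun forall i : 'I_n, V i} -> R),
      sum_over phi (fun s => p s S0) v /\
      sum_over (fun _ => True) (fun s => p s S0) g /\
      (forall x, cond_term (psi x phi) (fun iota => p iota S0) (u x)) /\
      (forall x, cond_term (psi x (fun _ => True)) (fun iota => p iota S0) (u' x)))
  /\
  (forall (v g : R) (u u' : {dffun forall i : 'I_n, V i} -> R),
      sum_over phi (fun s => p s S0) v ->
      sum_over (fun _ => True) (fun s => p s S0) g ->
      (forall x, cond_term (psi x phi) (fun iota => p iota S0) (u x)) ->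
      (forall x, cond_term (psi x (fun _ => True)) (fun iota => p iota S0) (u' x)) ->
      v / g = (\sum_x u x) / (\sum_x u' x)).
Proof.
move=> [_ [_ IS0]] P1 _ star psi.
pose ini := initial_of star.
pose mass Q x := if `[< Q (ini x) >] then p (ini x) S0 else 0.
have sumE Q : sum_over Q (fun s => p s S0) (\sum_x mass Q x).
  apply: (sum_over_reindex (initial_ofK star) (fluent_vectorK star)).
  by move=> s; apply: axP1_support P1 IS0.
have condE Q x : cond_term (psi x Q) (fun iota => p iota S0) (mass Q x).
  apply: cond_term_singleton => z; rewrite /psi -and_assoc initial_ofE.
  by split=> -[-> Qz].
split.
  exists (\sum_x mass phi x), (\sum_x mass (fun _ => True) x).
  by exists (mass phi), (mass (fun _ => True)); split; [|split; [|split]].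
move=> v g u u' Hv Hg Hu Hu'.
rewrite (sum_over_unique Hv (sumE _)) (sum_over_unique Hg (sumE _)).
congr (_ / _); apply: eq_bigr => x _.
- exact: cond_term_unique (condE phi x) (Hu x).
- exact: cond_term_unique (condE _ x) (Hu' x).
Qed.
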